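(* Let $n\ge 3$. The map $\phi_n:|\mathcal K_n|\to\mathbb{R}^n$ is a piecewise linear homeomorphism of $|\mathcal K_n|\cong\partial(W_n^\circ)$ onto the boundary sphere $\partial(Root_n)$. It maps the vertex set of $\mathcal K_n$ bijectively onto the vertex set $\{e_i-e_j: i\neq j\}$ of $Root_n$, and the images of the simplices of $\mathcal K_n$ form a triangulation (without new vertices) of $\partial(Root_n)$, in which every face of $Root_n$ is triangulated by images of simplices of $\mathcal K_n$.
   Context: Identify $[n]$ with the vertices of a regular $n$-gon in $S^1$, labelled counterclockwise, with counterclockwise order $\preceq$; for $a\ne b\in[n]$, $[a,b)=\{z\in S^1:a\preceq z\prec b\}$. A finite collection of such arcs is admissible if any two distinct members $I,J$ are either intersecting and strictly nested, or disjoint with the sink of neither equal to the source of the other. $\mathcal K_n$ is the simplicial complex on the $n(n-1)$ arcs $[i,j)$, $i\neq j$, whose simplices are the nonempty admissible families; it is isomorphic to the boundary complex of the polar dual $W_n^\circ$ of the $(n-1)$-dimensional cyclohedron $W_n$. $Root_n=\mathrm{Conv}\{e_i-e_j:1\le i\ne j\le n\}\subset H_0=\{x\in\mathbb{R}^n:\sum x_i=0\}$, boundary relative to $H_0$. $\phi_n$ is affine on each simplex of $\mathcal K_n$ and sends $[i,j)$ to $e_i-e_j$. *)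

From HB Require Import structures.
From mathcomp Require Import all_boot all_order all_algebra.
Set Implicit Arguments. Unset Strict Implicit. Unset Printing Implicit Defensive.
Import Order.TTheory GRing.Theory Num.Theory.

(* Vertices of the regular n-gon: 'I_n, labelled counterclockwise.
   An arc [i,j) (i <> j) is the pair (i,j) with i != j.                  *)
Definition carc (n : nat) := {p : 'I_n * 'I_n | p.1 != p.2}.
HB.instance Definition _ (n : nat) := Finite.on (carc n).


Definition src n (a : carc n) : 'I_n := (val a).1.
Definition snk n (a : carc n) : 'I_n := (val a).2.

Definition ccw n (i k : 'I_n) : nat := ((k + n - i) %% n)%N.

(* The arc [i,j) = {z in S^1 : i <= z < j} (counterclockwise) is the union of
   the unit edges [k,k+1) of the n-gon for k = i, i+1, ..., j-1 (mod n);
   it is encoded by this set of vertices k (set inclusion, intersection and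
   disjointness of arcs coincide with those of these sets).                *)
Definition arcset n (a : carc n) : {set 'I_n} :=
  [set k : 'I_n | (ccw (src a) k < ccw (src a) (snk a))%N].

Definition compatible n (I J : carc n) : bool :=
  [|| (arcset I \proper arcset J) && (arcset I :&: arcset J != set0),
      (arcset J \proper arcset I) && (arcset I :&: arcset J != set0)
    | [&& [disjoint arcset I & arcset J], snk I != src J & snk J != src I]].

Definition admissible n (S : {set carc n}) : bool :=
  [forall I in S, forall J in S, (I != J) ==> compatible I J].

Definition simplex n (S : {set carc n}) : bool := (S != set0) && admissible S.

Local Open Scope ring_scope.

Definition evec (R : rcfType) n (i : 'I_n) : 'rV[R]_n := delta_mx ord0 i.

Definition phiv (R : rcfType) n (a : carc n) : 'rV[R]_n :=
  evec R (src a) - evec R (snk a).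

(* Barycentric coordinates on the vertex set of K_n. *)
Definition coords (R : rcfType) n := {ffun carc n -> R}.

Definition supp (R : rcfType) n (l : coords R n) : {set carc n} :=
  [set a | l a != 0].

Definition convex_coef (R : rcfType) n (l : coords R n) : Prop :=
  (forall a, 0 <= l a) /\ \sum_a l a = 1.

(* The geometric realization |K_n| (standard realization in R^{arcs}):
   convex combinations whose support is a simplex of K_n.                 *)
Definition inRealization (R : rcfType) n (l : coords R n) : Prop :=
  convex_coef l /\ simplex (supp l).

Definition inSimplexPts (R : rcfType) n (S : {set carc n}) (l : coords R n)
  : Prop := convex_coef l /\ supp l \subset S.

Definition phi (R : rcfType) n (l : coords R n) : 'rV[R]_n :=
  \sum_a l a *: phiv R a.

Definition inImage (R : rcfType) n (S : {set carc n}) (x : 'rV[R]_n) : Prop :=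
  exists l : coords R n, inSimplexPts S l /\ phi l = x.

Definition inH0 (R : rcfType) n (x : 'rV[R]_n) : Prop := \sum_k x 0 k = 0.

Definition inRoot (R : rcfType) n (x : 'rV[R]_n) : Prop :=
  exists mu : coords R n, convex_coef mu /\ x = \sum_a mu a *: phiv R a.

(* Relative interior of Root_n in H_0 (balls for the sup norm). *)
Definition inRelInt (R : rcfType) n (x : 'rV[R]_n) : Prop :=
  exists2 eps : R, 0 < eps &
    forall y : 'rV[R]_n, inH0 y -> (forall k, `|y 0 k - x 0 k| < eps) ->
      inRoot y.

Definition inBoundary (R : rcfType) n (x : 'rV[R]_n) : Prop :=
  inRoot x /\ ~ inRelInt x.

Definition isVertexRoot (R : rcfType) n (x : 'rV[R]_n) : Prop :=
  inRoot x /\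
  forall (y z : 'rV[R]_n) (t : R), inRoot y -> inRoot z -> 0 < t -> t < 1 ->
    x = t *: y + (1 - t) *: z -> y = x /\ z = x.

Definition dotv (R : rcfType) n (c x : 'rV[R]_n) : R := \sum_k c 0 k * x 0 k.

(* Proper (nonempty-or-empty) face of Root_n cut out by a supporting
   hyperplane {c.x = b} with c.y <= b on Root_n, not containing all of Root_n. *)
Definition supportingProper (R : rcfType) n (c : 'rV[R]_n) (b : R) : Prop :=
  (forall y, inRoot y -> dotv c y <= b) /\ (exists y, inRoot y /\ dotv c y < b).

Definition inFace (R : rcfType) n (c : 'rV[R]_n) (b : R) (x : 'rV[R]_n)
  : Prop := inRoot x /\ dotv c x = b.

(* The height of coordinates [l] over the edge [k, k+1) of the n-gon is the
   total weight of the arcs covering it, and [phi l] is its discrete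
   derivative: (phi l)_k = h(k) - h(k-1).  For coordinates supported on an
   admissible family, the weight of an arc is read off from the heights,
   l_a = min_(k in a) h(k) - max(h(src a - 1), h(snk a)) when l_a > 0; since
   some height vanishes, the heights and hence the coordinates are Lipschitz
   functions of [phi l], which gives injectivity and a continuous inverse.
   Conversely every function on Z/n is, up to a constant, the height of
   admissible coordinates: lower a top plateau of the function to its rim,
   realise the result by induction on the number of jumps, and put the
   plateau back as one more arc.  Finally no vertex is both a source and a
   sink of an admissible family, so |phi l|_1 = 2 sum_a l_a; as Root_n is the
   l^1-ball of radius 2 in H_0, |K_n| is mapped onto its boundary, and a point
   of a proper face only uses arcs whose images lie in that face. *)

From HB Require Import structures.
From mathcomp Require Import all_boot all_order all_algebra.
From mathcomp Require Import zify ring lra.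
Set Implicit Arguments. Unset Strict Implicit. Unset Printing Implicit Defensive.
Import Order.TTheory GRing.Theory Num.Theory.

Section Arcs.
Variable n : nat.
Implicit Types (a b I J : carc n) (i k : 'I_n).

Lemma ordS_val k : (ordS k : nat) = if k.+1 == n then 0%N else k.+1.
Proof.
rewrite /ordS /=; have := ltn_ord k; case: eqP => [->|h] hk; first by rewrite modnn.
by rewrite modn_small //; lia.
Qed.

Lemma ord_pred_val k : (ord_pred k : nat) = if k == 0 :> nat then n.-1 else k.-1.
Proof.
rewrite /ord_pred /=; have := ltn_ord k; case: eqP => [->|h] hk.
  by rewrite add0n modn_small //; lia.
have -> : (k + n).-1 = k.-1 + n by lia.
by rewrite modnDr modn_small //; lia.
Qed.

Lemma ccwE i k : ccw i k = if (i <= k)%N then (k - i)%N else (k + n - i)%N.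
Proof.
rewrite /ccw; have := ltn_ord k; have := ltn_ord i; case: (leqP i k) => h hi hk.
  have -> : (k + n - i = (k - i) + n)%N by lia.
  by rewrite modnDr modn_small //; lia.
by rewrite modn_small //; lia.
Qed.

Lemma mem_arcset a k : (k \in arcset a) = (ccw (src a) k < ccw (src a) (snk a))%N.
Proof. by rewrite inE. Qed.

Lemma src_neq_snk a : src a != snk a.
Proof. by case: a => [[i j]]. Qed.

Lemma carc_eq a b : src a = src b -> snk a = snk b -> a = b.
Proof. by move=> es et; apply/val_inj/injective_projections. Qed.

Lemma ord_eqE i k : (i == k) = ((i : nat) == k).
Proof. by []. Qed.

(* All arc-membership facts below reduce to linear arithmetic on the values of
   the ordinals involved, after case analysis on the wrap-arounds. *)
Ltac arc_lia := rewrite ?ord_eqE ?mem_arcset ?ccwE ?ordS_val ?ord_pred_val;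
  repeat case: ifP; move=> *; lia.

Lemma src_in_arcset a : src a \in arcset a.
Proof. have := ltn_ord (src a); have := ltn_ord (snk a); have := src_neq_snk a; arc_lia. Qed.

Lemma snk_notin_arcset a : snk a \notin arcset a.
Proof. have := ltn_ord (src a); have := ltn_ord (snk a); have := src_neq_snk a; arc_lia. Qed.

Lemma pred_src_notin_arcset a : ord_pred (src a) \notin arcset a.
Proof. have := ltn_ord (src a); have := ltn_ord (snk a); have := src_neq_snk a; arc_lia. Qed.

Lemma pred_snk_in_arcset a : ord_pred (snk a) \in arcset a.
Proof. have := ltn_ord (src a); have := ltn_ord (snk a); have := src_neq_snk a; arc_lia. Qed.

Lemma ordS_leave_arcset a k :
  k \in arcset a -> ordS k \notin arcset a -> ordS k = snk a.
Proof.
move=> h1 h2; apply/eqP; move: h1 h2.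
have := ltn_ord k; have := ltn_ord (src a); have := ltn_ord (snk a); have := src_neq_snk a.
arc_lia.
Qed.

Lemma ordS_enter_arcset a k :
  k \notin arcset a -> ordS k \in arcset a -> ordS k = src a.
Proof.
move=> h1 h2; apply/eqP; move: h1 h2.
have := ltn_ord k; have := ltn_ord (src a); have := ltn_ord (snk a); have := src_neq_snk a.
arc_lia.
Qed.

Lemma arcset_src a k : (k \in arcset a) && (ord_pred k \notin arcset a) = (k == src a).
Proof.
apply/idP/idP => [|/eqP->]; last by rewrite src_in_arcset pred_src_notin_arcset.
have := ltn_ord k; have := ltn_ord (src a); have := ltn_ord (snk a); have := src_neq_snk a.
move=> ? ? ? ? /andP; arc_lia.
Qed.

Lemma arcset_snk a k : (k \notin arcset a) && (ord_pred k \in arcset a) = (k == snk a).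
Proof.
apply/idP/idP => [|/eqP->]; last by rewrite snk_notin_arcset pred_snk_in_arcset.
have := ltn_ord k; have := ltn_ord (src a); have := ltn_ord (snk a); have := src_neq_snk a.
move=> ? ? ? ? /andP; arc_lia.
Qed.

Lemma arcset_inj : injective (@arcset n).
Proof.
move=> a b e.
have /eqP hs : src a == src b by rewrite -arcset_src -e arcset_src.
have /eqP ht : snk a == snk b by rewrite -arcset_snk -e arcset_snk.
exact: carc_eq.
Qed.

Lemma ccw_inj i : injective (ccw i).
Proof.
move=> k k' h; apply/eqP; move: h.
have := ltn_ord k; have := ltn_ord k'; have := ltn_ord i; arc_lia.
Qed.

Lemma ccw_refl i : ccw i i = 0%N.
Proof. by rewrite ccwE leqnn subnn. Qed.

Lemma ccw_pred i k : k != i -> ccw i (ord_pred k) = (ccw i k).-1.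
Proof. have := ltn_ord k; have := ltn_ord i; arc_lia. Qed.

Lemma ccw_ind (P : 'I_n -> Prop) k0 :
  P k0 -> (forall k, k != k0 -> P (ord_pred k) -> P k) -> forall k, P k.
Proof.
move=> P0 PS; suff H t k : ccw k0 k = t -> P k by move=> k; exact: H.
elim: t k => [|t IH] k hk; first by rewrite (ccw_inj (etrans hk (esym (ccw_refl k0)))).
have k0k : k != k0 by apply: contra_eq_neq hk => ->; rewrite ccw_refl.
by apply: PS => //; apply: IH; rewrite ccw_pred // hk.
Qed.

Lemma pred_in_arcset a k : k \in arcset a -> k != src a -> ord_pred k \in arcset a.
Proof. by move=> ka; apply: contraNT => pk; rewrite -arcset_src ka. Qed.

Lemma arcset_crossing a (X : {set 'I_n}) :
  arcset a :&: X != set0 -> ~~ (arcset a \subset X) ->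
  exists k, [/\ k \in arcset a, ordS k \in arcset a & (k \in X) != (ordS k \in X)].
Proof.
move=> /set0Pn[x /setIP[xa xX]] /subsetPn[y ya yX].
have [/existsP[k /and3P[*]]|/existsPn noCross] :=
  boolP [exists k, [&& k \in arcset a, ordS k \in arcset a & (k \in X) != (ordS k \in X)]].
  by exists k.
suff const k : k \in arcset a -> (k \in X) = (src a \in X).
  by move: yX; rewrite (const y ya) -(const x xa) xX.
elim/(ccw_ind^~ (src a)): k => // k ks IH ka.
have pka := pred_in_arcset ka ks.
rewrite -(IH pka); have := noCross (ord_pred k); rewrite pka ord_predK ka.
by case: (k \in X); case: (ord_pred k \in X).
Qed.

Lemma compatible_cases I J : compatible I J ->
  [\/ arcset I \proper arcset J, arcset J \proper arcset I |
   [/\ [disjoint arcset I & arcset J], snk I != src J & snk J != src I]].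
Proof.
by case/or3P=> [/andP[? _]|/andP[? _]|/and3P[*]]; [apply: Or31|apply: Or32|apply: Or33].
Qed.

Lemma compatibleC I J : compatible I J = compatible J I.
Proof.
rewrite /compatible setIC (disjoint_sym (arcset J)).
case: (arcset I \proper arcset J); case: (arcset J \proper arcset I) => //=.
all: by rewrite ?(andbC (snk J != _)) ?orbb // (andbC (snk I != _)).
Qed.

Lemma disjoint_arcsetP I J k : [disjoint arcset I & arcset J] ->
  k \in arcset I -> k \notin arcset J.
Proof. by move=> /disjointFr dis /dis->. Qed.

Section Admissible.
Variable T : {set carc n}.
Hypothesis admT : admissible T.

Lemma admissible_compatible I J : I \in T -> J \in T -> I != J -> compatible I J.
Proof. by move: admT => /forall_inP H /H /forall_inP H' /H' /implyP. Qed.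

Lemma admissible_src_neq_snk a b : a \in T -> b \in T -> src a != snk b.
Proof.
move=> aT bT; apply/eqP => e.
have nab : a != b by apply: contra_eq_neq e => ->; exact: src_neq_snk.
case: (compatible_cases (admissible_compatible aT bT nab)).
- move=> /proper_sub /subsetP /(_ _ (src_in_arcset a)).
  by rewrite e (negbTE (snk_notin_arcset b)).
- move=> /proper_sub /subsetP /(_ _ (pred_snk_in_arcset b)).
  by rewrite -e (negbTE (pred_src_notin_arcset a)).
- by case=> _ _; rewrite e eqxx.
Qed.

Lemma admissible_pred_src_proper a b : a \in T -> b \in T ->
  ord_pred (src a) \in arcset b -> arcset a \proper arcset b.
Proof.
move=> aT bT pb.
have nba : b != a by apply: contraTneq pb => ->; exact: pred_src_notin_arcset.
case: (compatible_cases (admissible_compatible bT aT nba)) => //.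
- by move=> /proper_sub /subsetP /(_ _ pb); rewrite (negbTE (pred_src_notin_arcset a)).
- rewrite disjoint_sym => -[dis snk_b _].
  have src_a := disjoint_arcsetP dis (src_in_arcset a).
  by have := ordS_leave_arcset pb; rewrite ord_predK => /(_ src_a) e; rewrite e eqxx in snk_b.
Qed.

Lemma admissible_snk_proper a b : a \in T -> b \in T ->
  snk a \in arcset b -> arcset a \proper arcset b.
Proof.
move=> aT bT jb.
have nba : b != a by apply: contraTneq jb => ->; exact: snk_notin_arcset.
case: (compatible_cases (admissible_compatible bT aT nba)) => //.
- by move=> /proper_sub /subsetP /(_ _ jb); rewrite (negbTE (snk_notin_arcset a)).
- rewrite disjoint_sym => -[dis _ src_b].
  have := ordS_enter_arcset (disjoint_arcsetP dis (pred_snk_in_arcset a)).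
  by rewrite ord_predK => /(_ jb) e; rewrite e eqxx in src_b.
Qed.

(* Otherwise, among the arcs of [T] overlapping [a] without containing it, one
   with the largest overlap crosses the boundary of [a]; at the crossing it is
   strictly inside another such arc. *)
Lemma exists_point_in_supersets_only a :
  exists2 k, k \in arcset a &
    forall b, b \in T -> k \in arcset b -> arcset a \subset arcset b.
Proof.
have [/existsP[k /andP[ka /forall_inP H]]|/existsPn noPoint] := boolP [exists k,
    (k \in arcset a) && [forall b in T, (k \in arcset b) ==> (arcset a \subset arcset b)]].
  by exists k => // b bT /(implyP (H b bT)).
pose C := [set b in T | (arcset b :&: arcset a != set0) && ~~ (arcset a \subset arcset b)].
have coverC k : k \in arcset a -> exists2 b, b \in C & k \in arcset b.
  move=> ka; move: (noPoint k); rewrite ka /= => /forall_inPn[b bT].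
  rewrite negb_imply => /andP[kb nab]; exists b => //; rewrite !inE bT nab andbT.
  by apply/set0Pn; exists k; rewrite inE kb.
have [b0 b0C _] := coverC _ (src_in_arcset a).
have [bm bmC bm_max] := arg_maxnP (fun b => #|arcset b :&: arcset a|) b0C.
have /setIdP[bmT /andP[bm_meets_a a_notin_bm]] := bmC.
have [p [pa pbm [c cC [pc bm_c]]]] : exists p, [/\ p \in arcset a, p \notin arcset bm &
    exists2 c, c \in C & p \in arcset c /\ arcset bm \proper arcset c].
  rewrite setIC in bm_meets_a.
  have [k [ka ska]] := arcset_crossing bm_meets_a a_notin_bm.
  case kbm: (k \in arcset bm); case skbm: (ordS k \in arcset bm) => // _.
    have [c cC skc] := coverC _ ska; exists (ordS k); split => //; first exact: negbT.
    have cT : c \in T by case/setIdP: cC.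
    exists c => //; split => //; apply: admissible_snk_proper bmT cT _.
    by rewrite -(ordS_leave_arcset kbm (negbT skbm)).
  have [c cC kc] := coverC _ ka; exists k; split => //; first exact: negbT.
  have cT : c \in T by case/setIdP: cC.
  exists c => //; split => //; apply: admissible_pred_src_proper bmT cT _.
  by rewrite -(ordS_enter_arcset (negbT kbm) skbm) ordSK.
have : (#|arcset bm :&: arcset a| < #|arcset c :&: arcset a|)%N.
  apply: proper_card; apply/properP; split; first exact/setSI/proper_sub.
  by exists p; rewrite !in_setI ?pa ?pc ?(negbTE pbm).
by have := bm_max c cC => /=; lia.
Qed.

Lemma proper_arcset_ends a b : arcset a \proper arcset b ->
  (ord_pred (src a) \in arcset b) || (snk a \in arcset b).
Proof.
move=> pab; have sab := proper_sub pab.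
have meet : arcset b :&: arcset a != set0.
  by apply/set0Pn; exists (src a); rewrite in_setI src_in_arcset (subsetP sab) ?src_in_arcset.
have [k [kb skb]] := arcset_crossing meet (proper_subn pab).
case ka: (k \in arcset a); case ska: (ordS k \in arcset a) => // _.
  by rewrite -(ordS_leave_arcset ka (negbT ska)) skb orbT.
by rewrite -(ordS_enter_arcset (negbT ka) ska) ordSK kb.
Qed.

Lemma admissible_supersets_one_side a :
  {in T, forall b, arcset a \proper arcset b -> ord_pred (src a) \in arcset b} \/
  {in T, forall b, arcset a \proper arcset b -> snk a \in arcset b}.
Proof.
have [H|/forall_inPn[b1 b1T]] :=
  boolP [forall b in T, (arcset a \proper arcset b) ==> (ord_pred (src a) \in arcset b)].
  by left=> b bT; apply/implyP; move/forall_inP: H; apply.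
rewrite negb_imply => /andP[ab1 pb1]; right=> b bT ab.
have jb1 : snk a \in arcset b1 by move: (proper_arcset_ends ab1); rewrite (negbTE pb1).
apply: contraT => jb.
have pb : ord_pred (src a) \in arcset b.
  by move: (proper_arcset_ends ab); rewrite (negbTE jb) orbF.
have nbb1 : b != b1 by apply: contraNneq jb => ->.
case: (compatible_cases (admissible_compatible bT b1T nbb1)).
- by move=> /proper_sub /subsetP /(_ _ pb); rewrite (negbTE pb1).
- by move=> /proper_sub /subsetP /(_ _ jb1); rewrite (negbTE jb).
- case=> dis _ _; have sa := src_in_arcset a.
  have := subsetP (proper_sub ab1) _ sa.
  by rewrite (negbTE (disjoint_arcsetP dis (subsetP (proper_sub ab) _ sa))).
Qed.

End Admissible.

Lemma admissibleS (S T : {set carc n}) : S \subset T -> admissible T -> admissible S.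
Proof.
move=> /subsetP sST admT; apply/forall_inP=> I IS; apply/forall_inP=> J JS; apply/implyP.
exact: admissible_compatible (sST _ IS) (sST _ JS).
Qed.

End Arcs.

Local Open Scope ring_scope.

Lemma ler_sum_support (R : numDomainType) (I : finType) (P Q : pred I) (F : I -> R) :
  (forall i, 0 <= F i) -> (forall i, P i -> F i != 0 -> Q i) ->
  \sum_(i | P i) F i <= \sum_(i | Q i) F i.
Proof.
move=> F0 PQ; rewrite [leLHS]big_mkcond [leRHS]big_mkcond; apply: ler_sum => i _.
case Pi: (P i); case Qi: (Q i) => //; have [->//|/(PQ _ Pi)] := eqVneq (F i) 0.
by rewrite Qi.
Qed.

Section Heights.
Variables (R : rcfType) (n : nat).
Implicit Types (l : coords R n) (a b : carc n) (k : 'I_n).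

Definition height l k : R := \sum_(b | k \in arcset b) l b.

Definition rim (f : 'I_n -> R) a : R := Num.max (f (ord_pred (src a))) (f (snk a)).

Definition admissible_coords l : Prop := (forall a, 0 <= l a) /\ admissible (supp l).

Lemma in_supp l a : (a \in supp l) = (l a != 0).
Proof. by rewrite inE. Qed.

Lemma height_ge0 l k : (forall a, 0 <= l a) -> 0 <= height l k.
Proof. by move=> l0; apply: sumr_ge0. Qed.

Lemma sum_self_supersets l a :
  \sum_(b | (b == a) || (arcset a \proper arcset b)) l b =
  l a + \sum_(b | arcset a \proper arcset b) l b.
Proof.
rewrite (bigD1 a) ?eqxx //=; congr (_ + _); apply: eq_bigl => b.
by case: (eqVneq b a) => [->|]; rewrite ?properxx ?andbT.
Qed.

Lemma coef_add_rim_le_height l a k : admissible_coords l ->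
  0 < l a -> k \in arcset a -> l a + rim (height l) a <= height l k.
Proof.
case=> l0 adm la ka; have aS : a \in supp l by rewrite in_supp gt_eqF.
have : l a + \sum_(b | arcset a \proper arcset b) l b <= height l k.
  rewrite -sum_self_supersets; apply: ler_sum_support => // b.
  by case/orP=> [/eqP-> //|/proper_sub/subsetP ab _]; apply: ab.
apply: le_trans; rewrite lerD2l ge_max; apply/andP; split; apply: ler_sum_support => // b pb.
  by rewrite -in_supp => bS; have := admissible_pred_src_proper adm aS bS; apply.
by rewrite -in_supp => bS; have := admissible_snk_proper adm aS bS; apply.
Qed.

Lemma exists_height_le_coef_add_rim l a : admissible_coords l ->
  exists2 k, k \in arcset a & height l k <= l a + rim (height l) a.
Proof.
case=> l0 adm; have [k ka supersets] := exists_point_in_supersets_only adm a.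
exists k => //; apply: (@le_trans _ _ (l a + \sum_(b | arcset a \proper arcset b) l b)).
  rewrite -sum_self_supersets; apply: ler_sum_support => // b kb lb.
  have [->|nba] := eqVneq b a; rewrite ?eqxx //= properEneq supersets ?in_supp // andbT.
  by apply: contra_neq nba => /arcset_inj->.
rewrite lerD2l le_max; case: (admissible_supersets_one_side adm a) => side; apply/orP.
  by left; apply: ler_sum_support => // b ab lb; apply: side; rewrite ?in_supp.
by right; apply: ler_sum_support => // b ab lb; apply: side; rewrite ?in_supp.
Qed.

Lemma phivE a k : phiv R a 0 k = (src a == k)%:R - (snk a == k)%:R.
Proof. by rewrite /phiv !mxE !(eq_sym k). Qed.

Lemma phiE l k : phi l 0 k = \sum_a l a * phiv R a 0 k.
Proof. by rewrite /phi summxE; apply: eq_bigr => a _; rewrite mxE. Qed.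

Lemma heightE l k : height l k = \sum_a l a * (k \in arcset a)%:R.
Proof.
by rewrite /height big_mkcond; apply: eq_bigr => a _; case: (_ \in _); rewrite ?mulr1 ?mulr0.
Qed.

(* An arc starts contributing to the height at its source and stops at its sink. *)
Lemma height_sub_pred l k : height l k - height l (ord_pred k) = phi l 0 k.
Proof.
rewrite !heightE phiE -sumrB; apply: eq_bigr => a _; rewrite -mulrBr phivE; congr (_ * _).
rewrite eq_sym -arcset_src eq_sym -arcset_snk.
by case: (k \in arcset a); case: (ord_pred k \in arcset a); rewrite /= ?subrr ?subr0 ?sub0r.
Qed.

(* The sink of an arc of maximal length is covered by no arc of the support. *)
Lemma exists_height_eq0 l : (0 < n)%N -> admissible (supp l) -> exists k, height l k = 0.
Proof.
move=> n0 adm; have [suppl0|[a0 a0S]] := set_0Vmem (supp l).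
  exists (Ordinal n0); apply: big1 => b _; apply/eqP; apply: contraT => lb.
  by rewrite -in_supp suppl0 inE in lb.
have [a aS amax] := arg_maxnP (fun b => #|arcset b|) a0S.
exists (snk a); apply: big1 => b ab; apply/eqP; apply: contraT; rewrite -in_supp => bS.
have := proper_card (admissible_snk_proper adm aS bS ab).
by have := amax b bS => /=; lia.
Qed.

Lemma dist_le_variation (g : 'I_n -> R) k k' :
  `|g k - g k'| <= \sum_m `|g m - g (ord_pred m)|.
Proof.
pose D m := `|g m - g (ord_pred m)|.
suff : `|g k - g k'| <= \sum_(m | (0 < ccw k' m <= ccw k' k)%N) D m.
  by move/le_trans; apply; apply: ler_sum_support => // m; exact: normr_ge0.
elim/(fun P => @ccw_ind n P k'): k => [|k kk' IH].
  by rewrite subrr normr0 sumr_ge0 // => m _; exact: normr_ge0.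
have ccw_k : ccw k' k != 0%N.
  by apply: contra_neq _ kk' => ck; exact: ccw_inj (etrans ck (esym (ccw_refl k'))).
rewrite (bigD1 k) /=; last by rewrite leqnn andbT lt0n.
rewrite (eq_bigl (fun m => (0 < ccw k' m <= ccw k' (ord_pred k))%N)); last first.
  move=> m; rewrite ccw_pred // -(inj_eq (@ccw_inj _ k')); lia.
suff tri : `|g k - g k'| <= D k + `|g (ord_pred k) - g k'|.
  by apply: (le_trans tri); rewrite lerD2l.
by have := ler_normD (g k - g (ord_pred k)) (g (ord_pred k) - g k'); rewrite addrA subrK.
Qed.

Lemma height_dist_le l1 l2 k : (0 < n)%N ->
  admissible_coords l1 -> admissible_coords l2 ->
  `|height l1 k - height l2 k| <= \sum_m `|phi l1 0 m - phi l2 0 m|.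
Proof.
move=> n0 [l1_0 adm1] [l2_0 adm2].
pose g m := height l1 m - height l2 m.
have dg m : g m - g (ord_pred m) = phi l1 0 m - phi l2 0 m.
  by rewrite /g -!height_sub_pred; ring.
have var_g k' : `|g k - g k'| <= \sum_m `|phi l1 0 m - phi l2 0 m|.
  by under eq_bigr do rewrite -dg; exact: dist_le_variation.
have [u1 h1u1] := exists_height_eq0 n0 adm1; have [u2 h2u2] := exists_height_eq0 n0 adm2.
have g_u1 : g u1 <= 0 by rewrite /g h1u1 sub0r oppr_le0 height_ge0.
have g_u2 : 0 <= g u2 by rewrite /g h2u2 subr0 height_ge0.
have := var_g u1; have := var_g u2; rewrite -/(g k) !ler_norml.
by move=> /andP[? ?] /andP[? ?]; apply/andP; split; lra.
Qed.

Lemma rim_le_add (f1 f2 : 'I_n -> R) d a :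
  (forall k, `|f1 k - f2 k| <= d) -> rim f2 a <= rim f1 a + d.
Proof.
move=> f12; rewrite /rim ge_max.
have := f12 (ord_pred (src a)); have := f12 (snk a); rewrite !ler_norml.
set p := f1 (ord_pred (src a)); set j := f1 (snk a).
have : p <= Num.max p j by rewrite le_max lexx.
have : j <= Num.max p j by rewrite le_max lexx orbT.
by move=> ? ? /andP[? ?] /andP[? ?]; apply/andP; split; lra.
Qed.

(* [l a] is the gap between the lowest height over [a] and the rim of [a],
   and both move at most as much as the heights. *)
Lemma coef_le_add_height_dist l1 l2 d a :
  admissible_coords l1 -> admissible_coords l2 ->
  (forall k, `|height l1 k - height l2 k| <= d) -> l1 a <= l2 a + d *+ 2.
Proof.
move=> adm1 adm2 h12; have l2a_ge0 := adm2.1 a.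
have d_ge0 : 0 <= d by apply: le_trans (h12 (src a)).
have [->|l1a_neq0] := eqVneq (l1 a) 0; first by rewrite addr_ge0 ?mulrn_wge0.
have l1a_gt0 : 0 < l1 a by rewrite lt0r l1a_neq0 adm1.1.
have [k ka k_low] := exists_height_le_coef_add_rim a adm2.
have k_high := coef_add_rim_le_height adm1 l1a_gt0 ka.
have := rim_le_add a h12; have := h12 k; rewrite ler_norml mulr2n => /andP[_ ?].
lra.
Qed.

Lemma coef_dist_le_height_dist l1 l2 d a :
  admissible_coords l1 -> admissible_coords l2 ->
  (forall k, `|height l1 k - height l2 k| <= d) -> `|l1 a - l2 a| <= d *+ 2.
Proof.
move=> adm1 adm2 h12.
have h21 k : `|height l2 k - height l1 k| <= d by rewrite distrC.
have := coef_le_add_height_dist a adm1 adm2 h12.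
have := coef_le_add_height_dist a adm2 adm1 h21.
by rewrite ler_norml => ? ?; apply/andP; split; lra.
Qed.

Lemma admissible_phi_inj l1 l2 : (0 < n)%N ->
  admissible_coords l1 -> admissible_coords l2 -> phi l1 = phi l2 -> l1 = l2.
Proof.
move=> n0 adm1 adm2 e; apply/ffunP => a; apply/eqP; rewrite -subr_eq0 -normr_le0.
have heights_eq k : `|height l1 k - height l2 k| <= 0.
  have := height_dist_le k n0 adm1 adm2; rewrite e.
  by under eq_bigr do rewrite subrr normr0; rewrite big1.
by have := coef_dist_le_height_dist a adm1 adm2 heights_eq; rewrite mul0rn.
Qed.

End Heights.

Section Realizability.
Variables (R : rcfType) (n : nat).
Implicit Types (f : 'I_n -> R) (l : coords R n) (a b P : carc n) (k : 'I_n).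

Definition jumps f : {set 'I_n} := [set k | f k != f (ordS k)].

Definition lower_on P (m : R) f k : R := if k \in arcset P then m else f k.

Definition add_arc l P (t : R) : coords R n := [ffun a => l a + (if a == P then t else 0)].

Lemma jumps_eq0_const f k0 : jumps f = set0 -> forall k, f k = f k0.
Proof.
move=> jumps0; elim/(fun Q => @ccw_ind n Q k0) => // k _ IH.
rewrite -IH; have : ord_pred k \notin jumps f by rewrite jumps0 inE.
by rewrite inE ord_predK negbK => /eqP->.
Qed.

(* [P] runs from the first point of a maximal level set after some point
   below the maximum, up to the next point below the maximum. *)
Lemma exists_top_plateau f : jumps f != set0 ->
  exists2 P, {in arcset P, forall k, f k = f (src P)} & rim f P < f (src P).
Proof.
case/set0Pn => w0 w0_jump.
have [km _ kmax] := @arg_maxP _ R _ w0 predT f isT; set c := f km in kmax.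
have fc k : f k <= c := kmax k isT.
have [z fz] : exists z, f z < c.
  have [/existsP[z]|/existsPn below] := boolP [exists z, f z < c]; first by exists z.
  have all_c k : f k = c by apply/eqP; rewrite eq_le fc leNgt below.
  by rewrite inE !all_c eqxx in w0_jump.
have [i /eqP fi imin] := @arg_minnP _ km (fun k => f k == c) (ccw z) (eqxx _).
have [j fj jmin] := @arg_minnP _ z (fun k => f k < c) (ccw i) fz.
have ij : i != j by apply: contraTneq fj => <-; rewrite fi ltxx.
exists (exist _ (i, j) ij : carc n); rewrite /src /= fi.
  move=> k; rewrite mem_arcset /src /snk /= => ki; apply/eqP; rewrite eq_le fc /=.
  by rewrite leNgt; apply/negP => /jmin; lia.
rewrite /rim /src /snk /= gt_max fj andbT lt_neqAle fc andbT; apply/eqP => fpi.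
have zi : i != z by apply: contraTneq fz => <-; rewrite fi ltxx.
have := imin _ (introT eqP fpi); rewrite ccw_pred //.
have : ccw z i != 0%N.
  by apply: contra_neq zi => czi; apply: ccw_inj (etrans czi (esym (ccw_refl z))).
lia.
Qed.

Section Lowering.
Variables (f : 'I_n -> R) (P : carc n).
Let c := f (src P).
Let m := rim f P.
Hypothesis f_on_P : {in arcset P, forall k, f k = c}.
Hypothesis rim_lt : m < c.

Let pred_src_le : f (ord_pred (src P)) <= m. Proof. by rewrite /m /rim le_max lexx. Qed.
Let snk_le : f (snk P) <= m. Proof. by rewrite /m /rim le_max lexx orbT. Qed.
Let lower_in k : k \in arcset P -> lower_on P m f k = m.
Proof. by rewrite /lower_on => ->. Qed.
Let lower_out k : k \notin arcset P -> lower_on P m f k = f k.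
Proof. by rewrite /lower_on => /negbTE->. Qed.

Lemma jumps_lower_proper : jumps (lower_on P m f) \proper jumps f.
Proof.
apply/properP; split.
  apply/subsetP=> k; rewrite !inE.
  case kP: (k \in arcset P); case skP: (ordS k \in arcset P).
  - by rewrite !lower_in // eqxx.
  - rewrite (f_on_P kP) (ordS_leave_arcset kP (negbT skP)) => _.
    by rewrite eq_sym lt_eqF //; apply: le_lt_trans snk_le rim_lt.
  - have e := ordS_enter_arcset (negbT kP) skP.
    have -> : k = ord_pred (src P) by rewrite -e ordSK.
    rewrite ord_predK => _; rewrite lt_eqF //; apply: le_lt_trans pred_src_le rim_lt.
  - by rewrite !lower_out ?kP ?skP.
have [m_pred|m_snk] := leP (f (snk P)) (f (ord_pred (src P))).
  have m_eq : m = f (ord_pred (src P)) by apply/max_idPl.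
  exists (ord_pred (src P)); rewrite !inE ord_predK.
    by rewrite -/c lt_eqF // -m_eq.
  by rewrite lower_out ?pred_src_notin_arcset // lower_in ?src_in_arcset // m_eq negbK.
have m_eq : m = f (snk P) by apply/max_idPr/ltW.
exists (ord_pred (snk P)); rewrite !inE ord_predK.
  by rewrite f_on_P ?pred_snk_in_arcset // eq_sym lt_eqF // -m_eq.
by rewrite lower_in ?pred_snk_in_arcset // lower_out ?snk_notin_arcset // m_eq negbK.
Qed.

End Lowering.

Lemma height_add_arc l P t k :
  height (add_arc l P t) k = height l k + t * (k \in arcset P)%:R.
Proof.
rewrite !heightE (eq_bigr (fun a => l a * (k \in arcset a)%:R +
  (if a == P then t else 0) * (k \in arcset a)%:R)); last by move=> a _; rewrite ffunE mulrDl.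
rewrite big_split /=; congr (_ + _).
by rewrite (bigD1 P) //= eqxx big1 ?addr0 // => a /negbTE->; exact: mul0r.
Qed.

(* The arcs of the support of [l] sit strictly above their own rims, so they
   cannot cross a flat stretch of the height that is not below its rim. *)
Lemma plateau_compatible l P b : admissible_coords l ->
  {in arcset P, forall k, height l k = height l (src P)} ->
  rim (height l) P <= height l (src P) -> l b != 0 -> b != P -> compatible b P.
Proof.
move=> adm flat rimP lb bP; set H := height l (src P) in flat rimP.
have lb_gt0 : 0 < l b by rewrite lt0r lb adm.1.
have above k : k \in arcset b ->
    l b + height l (ord_pred (src b)) <= height l k /\ l b + height l (snk b) <= height l k.
  move=> kb; have := coef_add_rim_le_height adm lb_gt0 kb; rewrite /rim.
  set p := height l _; set j := height l _.
  have : p <= Num.max p j by rewrite le_max lexx.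
  have : j <= Num.max p j by rewrite le_max lexx orbT.
  by move=> ? ? ?; split; lra.
have : rim (height l) P <= H := rimP; rewrite /rim ge_max => /andP[predP snkP].
have [sub|nsub] := boolP (arcset P \subset arcset b).
  apply/or3P/Or32; rewrite properEneq sub andbT; apply/andP; split.
    by apply: contra_neq bP => /arcset_inj->.
  by apply/set0Pn; exists (src P); rewrite in_setI src_in_arcset (subsetP sub) ?src_in_arcset.
have dis : arcset P :&: arcset b == set0.
  apply: contraT => meet; have [k [kP skP]] := arcset_crossing meet nsub.
  case kb: (k \in arcset b); case skb: (ordS k \in arcset b) => // _.
    have [_] := above k kb.
    rewrite -(ordS_leave_arcset kb (negbT skb)) (flat _ kP) (flat _ skP) => ?.
    exfalso; lra.
  have [] := above _ skb.
  rewrite -(ordS_enter_arcset (negbT kb) skb) ordSK (flat _ kP) (flat _ skP) => ? _.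
  exfalso; lra.
apply/or3P/Or33/and3P; split; first by rewrite -setI_eq0 setIC.
  apply/eqP => e; have [_] := above _ (pred_snk_in_arcset b).
  by rewrite e flat ?src_in_arcset //; lra.
apply/eqP => e; have [] := above _ (src_in_arcset b).
by rewrite -e flat ?pred_snk_in_arcset //; lra.
Qed.

Lemma zero_coords_admissible : admissible_coords (0 : coords R n).
Proof.
split=> [a|]; first by rewrite ffunE.
by apply/forall_inP => a; rewrite in_supp ffunE eqxx.
Qed.

Section RaisePlateau.
Variables (f : 'I_n -> R) (P : carc n) (l : coords R n) (C : R).
Let c := f (src P).
Let m := rim f P.
Hypothesis f_on_P : {in arcset P, forall k, f k = c}.
Hypothesis rim_lt : m < c.
Hypothesis adm : admissible_coords l.
Hypothesis height_l : forall k, height l k = lower_on P m f k + C.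

Lemma height_raise_plateau k : height (add_arc l P (c - m)) k = f k + C.
Proof.
rewrite height_add_arc height_l /lower_on.
case: ifP => kP; last by rewrite mulr0 addr0.
by rewrite f_on_P // mulr1 addrAC subrKC.
Qed.

Lemma admissible_raise_plateau : admissible_coords (add_arc l P (c - m)).
Proof.
have lP a : a != P -> add_arc l P (c - m) a = l a by move=> aP; rewrite ffunE (negbTE aP) addr0.
split=> [a|].
  by rewrite ffunE addr_ge0 ?adm.1 //; case: ifP => _; rewrite ?subr_ge0 ?(ltW rim_lt).
have flat : {in arcset P, forall k, height l k = height l (src P)}.
  by move=> k kP; rewrite !height_l /lower_on kP src_in_arcset.
have rimP : rim (height l) P <= height l (src P).
  rewrite /rim !height_l /lower_on src_in_arcset (negbTE (pred_src_notin_arcset P)).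
  rewrite (negbTE (snk_notin_arcset P)) ge_max !lerD2r /m /rim le_max lexx /=.
  by rewrite le_max lexx orbT.
apply/forall_inP => I; rewrite in_supp => II; apply/forall_inP => J; rewrite in_supp => JJ.
apply/implyP => IJ; case: (eqVneq I P) => [eIP|IP]; case: (eqVneq J P) => [eJP|JP].
- by rewrite eIP eJP eqxx in IJ.
- by rewrite eIP compatibleC; apply: (plateau_compatible adm flat rimP); rewrite // -lP.
- by rewrite eJP; apply: (plateau_compatible adm flat rimP); rewrite // -lP.
- by apply: (admissible_compatible adm.2); rewrite ?in_supp -?lP.
Qed.

End RaisePlateau.

Lemma exists_coords_of_height f : (0 < n)%N ->
  exists2 l, admissible_coords l & exists C, forall k, height l k = f k + C.
Proof.
move=> n0; have [N] := ubnP #|jumps f|; elim: N f => // N IH f lt_f.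
have [jumps0|/exists_top_plateau[P f_on_P rim_lt]] := eqVneq (jumps f) set0.
  exists 0; first exact: zero_coords_admissible.
  exists (- f (Ordinal n0)) => k; rewrite (jumps_eq0_const (Ordinal n0) jumps0 k) addrN.
  by apply: big1 => a _; rewrite ffunE.
have [|l adm [C height_l]] := IH (lower_on P (rim f P) f).
  by have := proper_card (jumps_lower_proper f_on_P rim_lt); lia.
exists (add_arc l P (f (src P) - rim f P)); first exact: admissible_raise_plateau.
by exists C; exact: height_raise_plateau.
Qed.

End Realizability.

Section RootPolytope.
Variables (R : rcfType) (n : nat).
Implicit Types (l : coords R n) (a : carc n) (k : 'I_n) (x w : 'rV[R]_n).

Definition norm1 x : R := \sum_k `|x 0 k|.

Definition src_mass l k : R := \sum_a l a * (src a == k)%:R.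
Definition snk_mass l k : R := \sum_a l a * (snk a == k)%:R.

Lemma phi_mass l k : phi l 0 k = src_mass l k - snk_mass l k.
Proof. by rewrite phiE -sumrB; apply: eq_bigr => a _; rewrite phivE mulrBr. Qed.

Lemma src_mass_ge0 l k : (forall a, 0 <= l a) -> 0 <= src_mass l k.
Proof. by move=> l0; apply: sumr_ge0 => a _; rewrite mulr_ge0. Qed.

Lemma snk_mass_ge0 l k : (forall a, 0 <= l a) -> 0 <= snk_mass l k.
Proof. by move=> l0; apply: sumr_ge0 => a _; rewrite mulr_ge0. Qed.

Lemma sum_indicator (i : 'I_n) : \sum_k ((i == k)%:R : R) = 1.
Proof. by rewrite (bigD1 i) //= eqxx big1 ?addr0 // => k; rewrite eq_sym => /negbTE->. Qed.

Lemma sum_src_mass l : \sum_k src_mass l k = \sum_a l a.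
Proof.
by rewrite exchange_big; apply: eq_bigr => a _; rewrite -mulr_sumr sum_indicator mulr1.
Qed.

Lemma sum_snk_mass l : \sum_k snk_mass l k = \sum_a l a.
Proof.
by rewrite exchange_big; apply: eq_bigr => a _; rewrite -mulr_sumr sum_indicator mulr1.
Qed.

Lemma phi_H0 l : inH0 (phi l).
Proof.
rewrite /inH0; under eq_bigr do rewrite phi_mass.
by rewrite sumrB sum_src_mass sum_snk_mass subrr.
Qed.

Lemma norm1_phi_le l : (forall a, 0 <= l a) -> norm1 (phi l) <= (\sum_a l a) *+ 2.
Proof.
move=> l0; rewrite mulr2n -[X in X + _]sum_src_mass -sum_snk_mass -big_split /=.
apply: ler_sum => k _; rewrite phi_mass; apply: le_trans (ler_normB _ _) _.
by rewrite !ger0_norm ?src_mass_ge0 ?snk_mass_ge0.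
Qed.

(* No vertex is both a source and a sink of an admissible family, so there is
   no cancellation in [phi l]. *)
Lemma norm1_phi_admissible l : admissible_coords l -> norm1 (phi l) = (\sum_a l a) *+ 2.
Proof.
case=> l0 adm; rewrite mulr2n -[X in X + _]sum_src_mass -sum_snk_mass -big_split /=.
apply: eq_bigr => k _; rewrite phi_mass.
suff [->|->] : src_mass l k = 0 \/ snk_mass l k = 0.
- by rewrite sub0r add0r normrN ger0_norm ?snk_mass_ge0.
- by rewrite subr0 addr0 ger0_norm ?src_mass_ge0.
have [/existsP[b /andP[lb /eqP <-]]|/existsPn no_src] :=
  boolP [exists b, (l b != 0) && (src b == k)].
  right; apply: big1 => a _; have [->|la] := eqVneq (l a) 0; first by rewrite mul0r.
  by rewrite eq_sym (negbTE (admissible_src_neq_snk adm _ _)) ?mulr0 ?in_supp.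
left; apply: big1 => b _; move: (no_src b); rewrite negb_and negbK.
by case/orP=> [/eqP->|/negbTE->]; rewrite ?mul0r ?mulr0.
Qed.

Lemma exists_admissible_preimage x : (0 < n)%N -> inH0 x ->
  exists2 l, admissible_coords l & phi l = x.
Proof.
move=> n0 x0; pose F k := \sum_(m : 'I_n | (m <= k)%N) x 0 m.
have dF k : F k - F (ord_pred k) = x 0 k.
  rewrite /F (bigD1 k) //; have [k0|k0] := eqVneq (k : nat) 0%N.
    have -> : \sum_(m : 'I_n | (m <= ord_pred k)%N) x 0 m = 0.
      rewrite -[RHS]x0; apply: eq_bigl => m; rewrite ord_pred_val k0 /=.
      by have := ltn_ord m; lia.
    rewrite big1 => [|m /andP[mk]]; last by rewrite ord_eqE; lia.
    by rewrite subr0; exact: addr0.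
  rewrite (eq_bigl (fun m : 'I_n => (m <= ord_pred k)%N)) ?addrK // => m.
  by rewrite ord_pred_val (negbTE k0) ord_eqE; lia.
have [l adm [C hl]] := exists_coords_of_height F n0.
by exists l => //; apply/rowP => k; rewrite -height_sub_pred !hl -dF; ring.
Qed.

Lemma phi_add_arc l a t : phi (add_arc l a t) = phi l + t *: phiv R a.
Proof.
rewrite /phi (eq_bigr (fun b => l b *: phiv R b + (if b == a then t else 0) *: phiv R b)).
  rewrite big_split /=; congr (_ + _).
  by rewrite (bigD1 a) //= eqxx big1 ?addr0 // => b /negbTE->; rewrite scale0r.
by move=> b _; rewrite ffunE scalerDl.
Qed.

Lemma sum_add_arc l a t : \sum_b add_arc l a t b = \sum_b l b + t.
Proof.
rewrite (eq_bigr (fun b => l b + (if b == a then t else 0))) => [|b _]; last by rewrite ffunE.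
rewrite big_split /=; congr (_ + _).
by rewrite (bigD1 a) //= eqxx big1 ?addr0 // => b /negbTE->.
Qed.

Lemma inRoot_H0_norm1 x : inRoot x -> inH0 x /\ norm1 x <= 2.
Proof. by case=> mu [[mu0 mu1] ->]; split; [exact: phi_H0|rewrite -mu1 norm1_phi_le]. Qed.

(* The arcs [0,1) and [1,0) have opposite images, so weight can be added to
   both without moving the point. *)
Lemma inRoot_of_norm1 x : (1 < n)%N -> inH0 x -> norm1 x <= 2 -> inRoot x.
Proof.
move=> n1 x0 x_le2; have [l adm lx] := exists_admissible_preimage (ltnW n1) x0.
set s := \sum_a l a; have : s *+ 2 <= 2 by rewrite -norm1_phi_admissible // lx.
rewrite mulr2n => s_le1; have s_ge0 : 0 <= s by apply: sumr_ge0 => a _; exact: adm.1.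
pose i0 : 'I_n := Ordinal (ltnW n1); pose i1 : 'I_n := Ordinal n1.
pose a01 : carc n := exist _ (i0, i1) isT; pose a10 : carc n := exist _ (i1, i0) isT.
have opp : phiv R a01 + phiv R a10 = 0 by apply/rowP => k; rewrite !mxE; ring.
set t := (1 - s) / 2; have t_ge0 : 0 <= t by rewrite divr_ge0 // subr_ge0; lra.
exists (add_arc (add_arc l a01 t) a10 t); split; first split.
- have ite_ge0 (b : bool) : 0 <= (if b then t else 0) by case: b.
  by move=> a; rewrite !ffunE !addr_ge0 ?ite_ge0 ?adm.1.
- by rewrite !sum_add_arc -/s /t; field.
change (x = phi (add_arc (add_arc l a01 t) a10 t)).
by rewrite !phi_add_arc lx -addrA -scalerDr opp scaler0 addr0.
Qed.

Lemma norm1_coord_le x k : `|x 0 k| <= norm1 x.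
Proof. by rewrite /norm1 (bigD1 k) //= lerDl; apply: sumr_ge0. Qed.

Lemma inRelInt_norm1_lt x : (1 < n)%N -> inH0 x -> norm1 x < 2 -> inRelInt x.
Proof.
move=> n1 x0 x_lt2; set d := 2 - norm1 x.
have n_pos : 0 < n%:R + 1 :> R by rewrite ltr_wpDl ?ler0n.
set eps := d / (n%:R + 1).
have eps_gt0 : 0 < eps by rewrite divr_gt0 // subr_gt0.
have eps_n : eps * n%:R + eps = d by rewrite /eps; field; rewrite gt_eqF.
exists eps => // y y0 y_near; apply: inRoot_of_norm1 => //.
suff : norm1 y <= norm1 x + eps * n%:R by rewrite /d in eps_n; lra.
have -> : eps * n%:R = \sum_(k : 'I_n) eps by rewrite sumr_const card_ord mulr_natr.
rewrite /norm1 -big_split /=.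
apply: ler_sum => k _; rewrite -[y 0 k](subrK (x 0 k)).
apply: le_trans (ler_normD _ _) _.
by have := y_near k; lra.
Qed.

Lemma norm1_eq2_not_inRelInt x : inRoot x -> norm1 x = 2 -> ~ inRelInt x.
Proof.
move=> xR x2 [eps eps_gt0 near_x]; set t := eps / 4.
have t_gt0 : 0 < t by rewrite divr_gt0.
have [x0 _] := inRoot_H0_norm1 xR.
have y0 : inH0 ((1 + t) *: x).
  by rewrite /inH0; under eq_bigr do rewrite mxE; rewrite -mulr_sumr x0 mulr0.
have y_near k : `|((1 + t) *: x) 0 k - x 0 k| < eps.
  rewrite mxE mulrDl mul1r addrAC subrr add0r normrM (gtr0_norm t_gt0).
  have := norm1_coord_le x k; rewrite x2 => xk.
  have : t * `|x 0 k| <= t * 2 by rewrite ler_pM2l.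
  by rewrite /t; lra.
have [_] := inRoot_H0_norm1 (near_x _ y0 y_near).
rewrite /norm1; under eq_bigr do rewrite mxE normrM.
rewrite -mulr_sumr -/(norm1 x) x2 ger0_norm; last by rewrite addr_ge0 // ltW.
lra.
Qed.

Lemma inBoundaryP x : (1 < n)%N -> inBoundary x <-> inH0 x /\ norm1 x = 2.
Proof.
move=> n1; split=> [[xR not_int]|[x0 x2]].
  have [x0 x_le2] := inRoot_H0_norm1 xR; split=> //.
  apply/eqP; rewrite eq_le x_le2 leNgt; apply/negP => x_lt2.
  exact: not_int (inRelInt_norm1_lt n1 x0 x_lt2).
have xR : inRoot x by apply: inRoot_of_norm1; rewrite ?x2.
by split=> //; exact: norm1_eq2_not_inRelInt.
Qed.

Lemma phiv_inRoot a : inRoot (phiv R a).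
Proof.
exists (add_arc (0 : coords R n) a 1); split; first split.
- by move=> b; rewrite !ffunE add0r; case: (_ == _).
- by rewrite sum_add_arc big1 ?add0r // => b _; rewrite ffunE.
change (phiv R a = phi (add_arc 0 a 1)).
by rewrite phi_add_arc scale1r /phi big1 ?add0r // => b _; rewrite ffunE scale0r.
Qed.

Lemma split_sum2 (F : 'I_n -> R) (i j : 'I_n) : i != j ->
  \sum_k F k = F i + F j + \sum_(k | (k != i) && (k != j)) F k.
Proof.
move=> ij; rewrite (bigD1 i) //= (bigD1 j) 1?eq_sym //= addrA.
by congr (_ + _); apply: eq_bigl => k; rewrite andbC.
Qed.

Lemma inRoot_gap_le a w : inRoot w -> w 0 (src a) - w 0 (snk a) <= 2.
Proof.
move=> /inRoot_H0_norm1[_]; rewrite /norm1 (split_sum2 _ (src_neq_snk a)).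
have : 0 <= \sum_(k | (k != src a) && (k != snk a)) `|w 0 k| by apply: sumr_ge0.
have := ler_normB (w 0 (src a)) (w 0 (snk a)); have := ler_norm (w 0 (src a) - w 0 (snk a)).
lra.
Qed.

Lemma inRoot_gap_eq a w : inRoot w -> w 0 (src a) - w 0 (snk a) = 2 -> w = phiv R a.
Proof.
move=> wR gap; have [w0 w_le2] := inRoot_H0_norm1 wR.
have ij : src a != snk a := src_neq_snk a; set i := src a in ij gap *; set j := snk a in ij gap *.
set rest := \sum_(k | (k != i) && (k != j)) `|w 0 k|.
have rest_ge0 : 0 <= rest by apply: sumr_ge0.
have := ler_normB (w 0 i) (w 0 j); have := ler_norm (w 0 i - w 0 j).
move: w_le2; rewrite /norm1 (split_sum2 _ ij) -/rest => ? ? ?.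
have rest0 : rest = 0 by lra.
have w_out k : k != i -> k != j -> w 0 k = 0.
  move=> ki kj; apply/eqP; rewrite -normr_le0 -rest0 /rest (bigD1 k) ?ki ?kj //= lerDl.
  exact: sumr_ge0.
have wij : w 0 i + w 0 j = 0.
  by move: w0; rewrite /inH0 (split_sum2 _ ij) big1 ?addr0 // => k /andP[]; exact: w_out.
apply/rowP => k; rewrite phivE -/i -/j.
have [->|ki] := eqVneq k i; first by rewrite eq_sym (negbTE ij) subr0 mulr1n; lra.
have [->|kj] := eqVneq k j; first by rewrite mulr0n mulr1n sub0r; lra.
by rewrite w_out // subrr.
Qed.

Lemma phiv_isVertexRoot a : isVertexRoot (phiv R a).
Proof.
split=> [|y z t yR zR t_gt0 t_lt1 e]; first exact: phiv_inRoot.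
have gap_a : phiv R a 0 (src a) - phiv R a 0 (snk a) = 2.
  rewrite !phivE eqxx (negbTE (src_neq_snk a)) eq_sym (negbTE (src_neq_snk a)) eqxx /=; ring.
rewrite e !mxE in gap_a.
have := inRoot_gap_le a yR; have := inRoot_gap_le a zR => gz gy.
have gap_y : y 0 (src a) - y 0 (snk a) = 2 by nra.
have gap_z : z 0 (src a) - z 0 (snk a) = 2 by nra.
by split; apply: inRoot_gap_eq.
Qed.

Lemma phi_scale (c : R) l : phi [ffun b => c * l b] = c *: phi l.
Proof. by rewrite /phi scaler_sumr; apply: eq_bigr => b _; rewrite ffunE scalerA. Qed.

Lemma isVertexRoot_phiv x : isVertexRoot x -> exists a, x = phiv R a.
Proof.
case=> -[mu [[mu0 mu1] ->]] extreme.
have [a mu_a] : exists a, 0 < mu a.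
  have [/existsP[a ?]|/existsPn mu_le0] := boolP [exists a, 0 < mu a]; first by exists a.
  move: mu1; rewrite big1 => [/eqP|b _]; first by rewrite eq_sym oner_eq0.
  by apply/eqP; rewrite eq_le mu0 andbT leNgt mu_le0.
have mu_a_le1 : mu a <= 1 by rewrite -mu1 (bigD1 a) //= lerDl sumr_ge0.
set s := mu a / 2; have s_gt0 : 0 < s by rewrite divr_gt0.
have s_lt1 : s < 1 by rewrite /s; lra.
have s1_neq0 : 1 - s != 0 by rewrite subr_eq0 eq_sym lt_eqF.
pose mu' := [ffun b => (1 - s)^-1 * add_arc mu a (- s) b].
have mu'R : inRoot (phi mu').
  exists mu'; split=> //; split=> [b|].
    rewrite !ffunE mulr_ge0 ?invr_ge0 ?subr_ge0 ?(ltW s_lt1) //.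
    by case: eqP => [->|_]; rewrite ?addr0 ?mu0 // /s; lra.
  rewrite (eq_bigr (fun b => (1 - s)^-1 * add_arc mu a (- s) b)) => [|b _]; last by rewrite ffunE.
  by rewrite -mulr_sumr sum_add_arc mu1 mulVf.
have : phi mu = s *: phiv R a + (1 - s) *: phi mu'.
  by rewrite phi_scale scalerA mulfV // scale1r phi_add_arc scaleNr addrC subrK.
by case/(extreme _ _ _ (phiv_inRoot a) mu'R s_gt0 s_lt1) => <-; exists a.
Qed.

Lemma dotv_phi (c : 'rV[R]_n) l : dotv c (phi l) = \sum_a l a * dotv c (phiv R a).
Proof.
rewrite /dotv; under eq_bigr do rewrite phiE mulr_sumr.
rewrite exchange_big; apply: eq_bigr => a _; rewrite mulr_sumr.
by apply: eq_bigr => k _; rewrite mulrCA.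
Qed.

(* A point of a proper face can be pushed away from a point strictly below
   the face while staying in H_0, and then leaves Root_n. *)
Lemma face_not_inRelInt (c : 'rV[R]_n) (b : R) x :
  supportingProper c b -> inFace c b x -> ~ inRelInt x.
Proof.
move=> [below [y [yR y_lt]]] [xR xb] [eps eps_gt0 near_x].
set t := eps / 8; have t_gt0 : 0 < t by rewrite divr_gt0.
set w := x + t *: (x - y).
have [x0 x_le2] := inRoot_H0_norm1 xR; have [y0 y_le2] := inRoot_H0_norm1 yR.
have w0 : inH0 w.
  rewrite /inH0; under eq_bigr do rewrite !mxE.
  by rewrite big_split /= -mulr_sumr sumrB x0 y0 subrr mulr0 addr0.
have w_near k : `|w 0 k - x 0 k| < eps.
  rewrite !mxE addrAC subrr add0r normrM (gtr0_norm t_gt0).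
  have := norm1_coord_le x k; have := norm1_coord_le y k.
  have := ler_normB (x 0 k) (y 0 k) => ? ? ?.
  have : t * `|x 0 k - y 0 k| <= t * 4 by rewrite ler_pM2l //; lra.
  by rewrite /t; lra.
have := below _ (near_x _ w0 w_near).
have -> : dotv c w = dotv c x + t * (dotv c x - dotv c y).
  rewrite /dotv -sumrB mulr_sumr -big_split; apply: eq_bigr => k _.
  by rewrite !mxE /=; ring.
have : 0 < t * (b - dotv c y) by rewrite mulr_gt0 // subr_gt0.
by rewrite xb; lra.
Qed.

Lemma supported_coef_neq0 (c : 'rV[R]_n) (b : R) l :
  (forall y, inRoot y -> dotv c y <= b) -> convex_coef l -> dotv c (phi l) = b ->
  forall a, l a != 0 -> dotv c (phiv R a) = b.
Proof.
move=> below [l0 l1] lb a la.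
have gap_ge0 a' : 0 <= l a' * (b - dotv c (phiv R a')).
  by apply: mulr_ge0; [exact: l0|rewrite subr_ge0; apply/below/phiv_inRoot].
have sum0 : \sum_a' l a' * (b - dotv c (phiv R a')) = 0.
  by under eq_bigr do rewrite mulrBr; rewrite sumrB -dotv_phi lb -mulr_suml l1 mul1r subrr.
have /eqP := psumr_eq0P (fun a' _ => gap_ge0 a') sum0 (i := a) isT.
by rewrite mulf_eq0 (negbTE la) subr_eq0 eq_sym => /eqP.
Qed.

End RootPolytope.

Section Triangulation.
Variables (R : rcfType) (n : nat).
Hypothesis n_gt1 : (1 < n)%N.
Implicit Types (l : coords R n) (a : carc n) (S T : {set carc n}) (x : 'rV[R]_n).

Lemma convex_supp_neq0 l : convex_coef l -> supp l != set0.
Proof.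
case=> _ l1; apply/negP => /eqP supp0; move: l1.
rewrite big1 => [/eqP|a _]; first by rewrite eq_sym oner_eq0.
by apply/eqP; rewrite -[_ == _]negbK -in_supp supp0 inE.
Qed.

Lemma realizationP l : inRealization l <-> convex_coef l /\ admissible (supp l).
Proof.
rewrite /inRealization /simplex; split=> [[lc /andP[]]|[lc adm]] //.
by split; rewrite // adm convex_supp_neq0.
Qed.

Lemma simplexPts_realization S l : simplex S -> inSimplexPts S l -> inRealization l.
Proof.
by case/andP=> _ admS [lc lS]; apply/realizationP; split; last exact: admissibleS lS admS.
Qed.

Lemma realization_admissible l : inRealization l -> admissible_coords l.
Proof. by case/realizationP=> -[l0 _] adm. Qed.

Lemma phi_inj_realization l1 l2 :
  inRealization l1 -> inRealization l2 -> phi l1 = phi l2 -> l1 = l2.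
Proof.
move=> /realization_admissible adm1 /realization_admissible adm2.
exact: admissible_phi_inj (ltnW n_gt1) adm1 adm2.
Qed.

Lemma inBoundary_phi x : inBoundary x <-> exists l, inRealization l /\ phi l = x.
Proof.
rewrite inBoundaryP //; split=> [[x0 x2]|[l [lK <-]]].
  have [l adm lx] := exists_admissible_preimage (ltnW n_gt1) x0.
  have l1 : \sum_a l a = 1 by move: x2; rewrite -lx norm1_phi_admissible // mulr2n; lra.
  by exists l; split=> //; apply/realizationP; split; first split; [exact: adm.1| |exact: adm.2].
have [[_ l1] _] := (realizationP l).1 lK.
by split; [exact: phi_H0|rewrite norm1_phi_admissible ?l1 //; exact: realization_admissible].
Qed.

Lemma phi_continuous l eps : 0 < eps ->
  exists2 delta, 0 < delta & forall l', (forall a, `|l' a - l a| < delta) ->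
    forall k, `|phi l' 0 k - phi l 0 k| < eps.
Proof.
move=> eps_gt0; set N : R := #|{: carc n}|%:R.
have N1_gt0 : 0 < N + 1 by rewrite ltr_wpDl ?ler0n.
set delta := eps / (N + 1); have delta_gt0 : 0 < delta by rewrite divr_gt0.
exists delta => // l' near k; rewrite !phiE -sumrB.
apply: le_lt_trans (ler_norm_sum _ _ _) _.
apply: (@le_lt_trans _ _ (\sum_(a : carc n) delta)).
  apply: ler_sum => a _; rewrite -mulrBl normrM phivE.
  apply: le_trans (ler_wpM2l (normr_ge0 _) (_ : _ <= 1)) _.
    by case: (_ == _); case: (_ == _); rewrite ?subrr ?normr0 ?subr0 ?sub0r ?normrN ?normr1.
  by rewrite mulr1 ltW.
rewrite sumr_const -mulr_natr -/N.
have : delta * N + delta = eps by rewrite /delta; field; rewrite gt_eqF.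
lra.
Qed.

Lemma phi_inv_continuous l : inRealization l -> forall eps, 0 < eps ->
  exists2 delta, 0 < delta & forall l', inRealization l' ->
    (forall k, `|phi l' 0 k - phi l 0 k| < delta) -> forall a, `|l' a - l a| < eps.
Proof.
move=> /realization_admissible adm eps eps_gt0; set N : R := n%:R.
have N2_gt0 : 0 < N *+ 2 + 1 by rewrite ltr_wpDl ?mulrn_wge0 ?ler0n.
set delta := eps / (N *+ 2 + 1); have delta_gt0 : 0 < delta by rewrite divr_gt0.
exists delta => // l' /realization_admissible adm' near a.
set d := \sum_m `|phi l' 0 m - phi l 0 m|.
have d_le : d <= delta * N.
  have -> : delta * N = \sum_(m : 'I_n) delta by rewrite sumr_const card_ord mulr_natr.
  by apply: ler_sum => m _; exact: ltW.
have := coef_dist_le_height_dist a adm' adm (fun k => height_dist_le k (ltnW n_gt1) adm' adm).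
have : delta * (N *+ 2) + delta = eps.
  by rewrite /delta; field; apply/eqP; move: N2_gt0; rewrite /N mulr2n; lra.
by rewrite !mulr2n -/d; lra.
Qed.

Lemma simplex_set1 a : simplex [set a].
Proof.
apply/andP; split; first by apply/set0Pn; exists a; rewrite inE.
by apply/forall_inP => I /set1P->; apply/forall_inP => J /set1P->; rewrite eqxx.
Qed.

Lemma phiv_eq1 a k : (phiv R a 0 k == 1) = (k == src a).
Proof.
rewrite phivE; have [->|ks] := eqVneq k (src a).
  by rewrite (eq_sym (snk a)) (negbTE (src_neq_snk a)) mulr1n mulr0n subr0 eqxx.
rewrite mulr0n sub0r; case: (snk a == k); rewrite ?mulr1n ?mulr0n.
  by apply/negbTE/eqP; lra.
by rewrite oppr0 eq_sym oner_eq0.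
Qed.

Lemma phiv_eqN1 a k : (phiv R a 0 k == -1) = (k == snk a).
Proof.
rewrite phivE; have [->|kj] := eqVneq k (snk a).
  by rewrite (negbTE (src_neq_snk a)) mulr1n mulr0n sub0r eqxx.
rewrite mulr0n subr0; case: (src a == k); rewrite ?mulr1n ?mulr0n.
  by apply/negbTE/eqP; lra.
by apply/negbTE/eqP; lra.
Qed.

Lemma phiv_inj : injective (@phiv R n).
Proof.
move=> a b e; have /eqP es : src a == src b by rewrite -phiv_eq1 -e phiv_eq1.
have /eqP et : snk a == snk b by rewrite -phiv_eqN1 -e phiv_eqN1.
exact: carc_eq.
Qed.

Lemma isVertexRootP x : isVertexRoot x <-> exists a, x = phiv R a.
Proof. by split=> [/isVertexRoot_phiv|[a ->]]; last exact: phiv_isVertexRoot. Qed.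

Lemma admissible_phiv_free S mu : admissible S -> supp mu \subset S ->
  \sum_a mu a *: phiv R a = 0 -> mu = 0.
Proof.
move=> admS muS mu_phi0.
have part_adm (p : coords R n) : (forall a, 0 <= p a) ->
    (forall a, p a != 0 -> mu a != 0) -> admissible_coords p.
  move=> p0 p_mu; split=> //; apply: admissibleS admS; apply: subset_trans muS.
  by apply/subsetP => a; rewrite !in_supp; exact: p_mu.
pose pos : coords R n := [ffun a => if 0 <= mu a then mu a else 0].
pose neg : coords R n := [ffun a => if 0 <= mu a then 0 else - mu a].
have mu_pos_neg a : mu a = pos a - neg a.
  by rewrite !ffunE; case: ifP; rewrite ?subr0 ?sub0r ?opprK.
have pos_adm : admissible_coords pos.
  apply: part_adm => a; rewrite ffunE; case: ifP => //; rewrite ?eqxx //.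
have neg_adm : admissible_coords neg.
  apply: part_adm => a; rewrite ffunE; case: ifP => [_|/negbT]; rewrite ?eqxx ?oppr_eq0 //.
  by rewrite -ltNge oppr_ge0 => /ltW.
have : phi pos = phi neg.
  apply/eqP; rewrite -subr_eq0 /phi -sumrB -[X in _ == X]mu_phi0; apply/eqP.
  by apply: eq_bigr => a _; rewrite -scalerBl -mu_pos_neg.
move/(admissible_phi_inj (ltnW n_gt1) pos_adm neg_adm) => pos_neg.
by apply/ffunP => a; rewrite mu_pos_neg pos_neg subrr ffunE.
Qed.

Lemma inImage_setI S T x : simplex S -> simplex T ->
  inImage S x /\ inImage T x <-> inImage (S :&: T) x.
Proof.
move=> simS simT; split=> [[[l1 [l1S e1]] [l2 [l2T e2]]]|[l [[lc lST] e]]].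
  have l12 := phi_inj_realization (simplexPts_realization simS l1S)
    (simplexPts_realization simT l2T) (etrans e1 (esym e2)).
  by exists l1; split=> //; split; [exact: l1S.1|rewrite subsetI l1S.2 l12 l2T.2].
split; exists l; split=> //; split=> //; apply: subset_trans lST _.
  exact: subsetIl.
exact: subsetIr.
Qed.

Lemma inBoundary_inImage x : inBoundary x <-> exists2 S, simplex S & inImage S x.
Proof.
rewrite inBoundary_phi; split=> [[l [lK e]]|[S simS [l [lS e]]]].
  by exists (supp l); [case: lK|exists l; split=> //; split=> //; case: lK].
by exists l; split=> //; exact: simplexPts_realization simS lS.
Qed.

Lemma face_triangulated (c : 'rV[R]_n) (b : R) x :
  supportingProper c b -> inFace c b x ->
  exists S, [/\ simplex S, inImage S x & forall y, inImage S y -> inFace c b y].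
Proof.
move=> proper xF; have xB : inBoundary x by split; [case: xF|exact: face_not_inRelInt proper xF].
have [l [lK lx]] := (inBoundary_phi x).1 xB.
have lc : convex_coef l by case: lK.
have supp_face := supported_coef_neq0 proper.1 lc (etrans (congr1 _ lx) xF.2).
exists (supp l); split; first by case: lK.
  by exists l; split=> //; split.
move=> y [mu [[mc muS] <-]]; split; first by exists mu; split.
rewrite dotv_phi -[RHS]mul1r -mc.2 mulr_suml; apply: eq_bigr => a _.
have [->|mua] := eqVneq (mu a) 0; first by rewrite !mul0r.
by rewrite supp_face // -in_supp (subsetP muS) // in_supp.
Qed.

End Triangulation.

Unset Implicit Arguments.

Theorem mainTheorem5 (R : rcfType) (n : nat) (hn : (3 <= n)%N) :
  (* phi_n is injective on |K_n| *)
  (forall l1 l2 : coords R n, inRealization l1 -> inRealization l2 ->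
     phi l1 = phi l2 -> l1 = l2) /\
  (* phi_n maps |K_n| onto the relative boundary of Root_n *)
  (forall x : 'rV[R]_n,
     inBoundary x <-> exists l : coords R n, inRealization l /\ phi l = x) /\
  (* phi_n is continuous (sup norms) *)
  (forall l : coords R n, inRealization l -> forall eps : R, 0 < eps ->
     exists2 delta : R, 0 < delta & forall l' : coords R n, inRealization l' ->
       (forall a, `|l' a - l a| < delta) ->
       forall k, `|phi l' 0 k - phi l 0 k| < eps) /\
  (* its inverse on the boundary is continuous: phi_n is a homeomorphism *)
  (forall l : coords R n, inRealization l -> forall eps : R, 0 < eps ->
     exists2 delta : R, 0 < delta & forall l' : coords R n, inRealization l' ->
       (forall k, `|phi l' 0 k - phi l 0 k| < delta) ->
       forall a, `|l' a - l a| < eps) /\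
  (* vertices of K_n go bijectively onto the vertices of Root_n *)
  (forall a : carc n, simplex [set a]) /\
  injective (@phiv R n) /\
  (forall x : 'rV[R]_n, isVertexRoot x <-> exists a : carc n, x = phiv R a) /\
  (* images of simplices are nondegenerate geometric simplices *)
  (forall (S : {set carc n}) (mu : coords R n), simplex S ->
     supp mu \subset S -> \sum_a mu a = 0 -> \sum_a mu a *: phiv R a = 0 ->
     mu = 0) /\
  (* any two of them meet in the image of their common face *)
  (forall (S T : {set carc n}) (x : 'rV[R]_n), simplex S -> simplex T ->
     (inImage S x /\ inImage T x <-> inImage (S :&: T) x)) /\
  (* they cover exactly the boundary of Root_n *)
  (forall x : 'rV[R]_n,
     inBoundary x <-> exists2 S : {set carc n}, simplex S & inImage S x) /\
  (* every proper face of Root_n is a union of images of simplices *)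
  (forall (c : 'rV[R]_n) (b : R), supportingProper c b ->
     forall x : 'rV[R]_n, inFace c b x ->
       exists S : {set carc n}, [/\ simplex S, inImage S x &
         forall y, inImage S y -> inFace c b y]).
Proof.
have n_gt1 : (1 < n)%N by apply: leq_trans hn.
split; first exact: phi_inj_realization n_gt1.
split; first exact: inBoundary_phi n_gt1.
split.
  move=> l _ eps eps_gt0; have [delta delta_gt0 near] := phi_continuous l eps_gt0.
  by exists delta => // l' _; exact: near.
split; first exact: phi_inv_continuous n_gt1.
split; first exact: simplex_set1.
split; first exact: phiv_inj.
split; first exact: isVertexRootP.
split; first by move=> S mu /andP[_ admS] muS _; apply: (admissible_phiv_free n_gt1 admS muS).
split; first by move=> S T x simS simT; exact (inImage_setI n_gt1 x simS simT).
split; first exact: inBoundary_inImage n_gt1.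
by move=> c b proper x xF; exact (face_triangulated n_gt1 proper xF).
Qed.
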